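(* Let $\delta\in\Lambda$ be any root ($\delta^2=-2$) and let $\delta=\delta_{\mathbb K_\gamma}+\delta_{\mathbb E_\gamma}$ with $\delta_{\mathbb K_\gamma}\in\mathbb K_\gamma^\vee$, $\delta_{\mathbb E_\gamma}\in\mathbb E_\gamma^\vee$ be its orthogonal decomposition. Then $\delta_{\mathbb K_\gamma}-d_1\in\mathbb K_\gamma$ and $\delta_{\mathbb E_\gamma}-d_2\in\mathbb E_\gamma$. In particular $\Lambda=\mathbb Z\delta+\mathbb K_\gamma\oplus\mathbb E_\gamma$.
   Context: $\Lambda=\mathbb U(2)\oplus\mathbb U\oplus\mathbb E_8(2)$ (Enriques lattice; $\mathbb U$ hyperbolic plane, $\mathbb E_8$ negative-definite, $(2)$ scaling by 2). Setting: $\iota$ is a fixed-point-free involution of a Kummer surface $K_{\tau,\tau'}=\mathrm{Km}(E_\tau\times E_{\tau'})$ with $\mathbf K\subset H^2(K_{\tau,\tau'},\mathbb Z)_-$, where $\mathbf K\cong\mathbb U(2)\oplus\mathbb U(2)$ is the image of $H^1(E_\tau,\mathbb Z)\otimes H^1(E_{\tau'},\mathbb Z)$; $\alpha$ is a marking with $\alpha(H^2_-)=\Lambda$; $\gamma\in A_{\mathbf K}\setminus\{0\}$ is the patching element of $\iota$. Put $\mathbb K_\gamma=\alpha(\mathbf K)\cong\mathbb U(2)\oplus\mathbb U(2)$ and $\mathbb E_\gamma=\alpha(\mathbf K^{\perp_{H^2_-}})$, the orthogonal complement of $\mathbb K_\gamma$ in $\Lambda$, which is isometric to $\mathbb E_8(2)$;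 both embed primitively in $\Lambda$, and $\Lambda=\mathbb Z(d_1+d_2)+\mathbb K_\gamma\oplus\mathbb E_\gamma\subset\mathbb K_\gamma^\vee\oplus\mathbb E_\gamma^\vee$ for some $d_1\in\mathbb K_\gamma^\vee\setminus\mathbb K_\gamma$, $d_2\in\mathbb E_\gamma^\vee\setminus\mathbb E_\gamma$. *)

(* Lattices are modelled inside V = Q^12 = 'rV[rat]_12. *)
From HB Require Import structures.
From mathcomp Require Import all_boot all_order all_algebra.
Set Implicit Arguments. Unset Strict Implicit. Unset Printing Implicit Defensive.
Import Order.TTheory GRing.Theory Num.Theory.
Local Open Scope ring_scope.

(* Negative-definite E8 (Bourbaki labelling, 0-indexed):
   -2 on the diagonal, +1 on the edges of the Dynkin diagram. *)
Definition e8_edge (i j : nat) : bool :=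
  ((i, j) \in [:: (0,2); (2,3); (3,4); (4,5); (5,6); (6,7); (1,3)])%N ||
  ((j, i) \in [:: (0,2); (2,3); (3,4); (4,5); (5,6); (6,7); (1,3)])%N.
Definition e8_entry (i j : nat) : int :=
  if i == j then -2 else if e8_edge i j then 1 else 0.

Definition E8_2Gram : 'M[rat]_8 := \matrix_(i, j) (2 * e8_entry i j)%:~R.

Definition KGram : 'M[rat]_4 :=
  \matrix_(i, j)
    (if ((i == 0 :> nat) && (j == 1 :> nat)) || ((i == 1 :> nat) && (j == 0 :> nat))
        || ((i == 2 :> nat) && (j == 3 :> nat)) || ((i == 3 :> nat) && (j == 2 :> nat))
     then 2 else 0).

(* Gram matrix of the Enriques lattice  U(2) + U + E8(2),
   coordinates 0,1 : U(2);  2,3 : U;  4..11 : E8(2). *)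
Definition lam_entry (i j : nat) : int :=
  if ((i == 0) && (j == 1)) || ((i == 1) && (j == 0)) then 2
  else if ((i == 2) && (j == 3)) || ((i == 3) && (j == 2)) then 1
  else if (4 <= i)%N && (4 <= j)%N then 2 * e8_entry (i - 4) (j - 4)
  else 0.
Definition LamGram : 'M[rat]_12 := \matrix_(i, j) (lam_entry i j)%:~R.

Definition lamform (x y : 'rV[rat]_12) : rat := (x *m LamGram *m y^T) 0 0.

Definition inLambda (x : 'rV[rat]_12) : Prop := forall i, x 0 i \is a Num.int.

Definition inZspan m (B : 'M[rat]_(m, 12)) (x : 'rV[rat]_12) : Prop :=
  exists c : 'rV[int]_m, x = map_mx (fun z : int => z%:~R) c *m B.

Definition QSpan (L : 'rV[rat]_12 -> Prop) (x : 'rV[rat]_12) : Prop :=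
  exists n : nat, (0 < n)%N /\ L (n%:R *: x).

Definition dual (L : 'rV[rat]_12 -> Prop) (x : 'rV[rat]_12) : Prop :=
  QSpan L x /\ forall y, L y -> lamform x y \is a Num.int.

Definition primitive (L : 'rV[rat]_12 -> Prop) : Prop :=
  forall x, inLambda x -> QSpan L x -> L x.

Definition Kset (BK : 'M[rat]_(4, 12)) : 'rV[rat]_12 -> Prop := inZspan BK.

Definition Eset (BK : 'M[rat]_(4, 12)) (x : 'rV[rat]_12) : Prop :=
  inLambda x /\ forall k, Kset BK k -> lamform x k = 0.

From HB Require Import structures.
From mathcomp Require Import all_boot all_order all_algebra.
From mathcomp Require Import ring zify.
Set Implicit Arguments. Unset Strict Implicit. Unset Printing Implicit Defensive.
Import Order.TTheory GRing.Theory Num.Theory.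
Local Open Scope ring_scope.

(* Write del = n (d1 + d2) + k + e with k in K and e in E.  The Gram matrix G of
   K = U(2) + U(2) satisfies G^2 = 4, so 2 K^vee is contained in K.  If n were even,
   del would then be an orthogonal sum a + b with a in K and, by primitivity of E,
   b in E; all norms in U(2) + U(2) and in E8(2) are divisible by 4, contradicting
   del^2 = -2.  Hence n is odd.  Since K (x) Q and E (x) Q meet only in 0, the
   K-component of del is n d1 + k, which is d1 modulo K; the E-component is then d2
   modulo E by primitivity.  So del - (d1 + d2) lies in K + E, and del generates
   Lambda over K + E exactly as d1 + d2 does. *)

Section ZClosed.
Variables (R : pzRingType) (V : lmodType R).

Definition zclosed (L : V -> Prop) := L 0 /\ forall x y, L x -> L y -> L (x - y).

Section Closure.
Variable L : V -> Prop.
Hypothesis L_closed : zclosed L.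

Lemma zclosed0 : L 0. Proof. by case: L_closed. Qed.

Lemma zclosedB x y : L x -> L y -> L (x - y).
Proof. by case: L_closed => _; apply. Qed.

Lemma zclosedN x : L x -> L (- x).
Proof. by move=> Lx; rewrite -sub0r; apply: zclosedB zclosed0 Lx. Qed.

Lemma zclosedD x y : L x -> L y -> L (x + y).
Proof. by move=> Lx Ly; rewrite -[y]opprK; apply/zclosedB/zclosedN. Qed.

Lemma zclosedMn x n : L x -> L (x *+ n).
Proof.
move=> Lx; elim: n => [|n IHn]; first by rewrite mulr0n; apply: zclosed0.
by rewrite mulrS; apply: zclosedD.
Qed.

Lemma zclosedZ x (n : int) : L x -> L (n%:~R *: x).
Proof.
move=> Lx; rewrite scaler_int; case: n => n; first exact: zclosedMn.
by rewrite NegzE mulrNz; apply/zclosedN/zclosedMn.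
Qed.

Lemma zclosed_sum I r (P : pred I) (F : I -> V) :
  (forall i, P i -> L (F i)) -> L (\sum_(i <- r | P i) F i).
Proof. by move=> LF; apply: big_ind => //; [apply: zclosed0 | apply: zclosedD]. Qed.

End Closure.

Definition glue_span (g : V) (K E : V -> Prop) (x : V) :=
  exists (n : int) k e, [/\ K k, E e & x = n%:~R *: g + k + e].

Lemma glue_span_shift (K E : V -> Prop) g k0 e0 x :
  zclosed K -> zclosed E -> K k0 -> E e0 ->
  glue_span g K E x -> glue_span (g + k0 + e0) K E x.
Proof.
move=> Kc Ec Kk0 Ee0 [n [k [e [Kk Ee ->]]]].
exists n, (k - n%:~R *: k0), (e - n%:~R *: e0); split.
- by apply: zclosedB => //; apply: zclosedZ.
- by apply: zclosedB => //; apply: zclosedZ.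
rewrite !scalerDr.
set a := n%:~R *: g; set b := n%:~R *: k0; set c := n%:~R *: e0.
by rewrite (addrAC _ c) -(addrA _ c) (addrC c) subrK -(addrA a b) (addrC b) subrK.
Qed.

End ZClosed.

Lemma inLambda_closed : zclosed inLambda.
Proof.
split=> [i | x y Lx Ly i]; rewrite !mxE //.
exact: rpredB.
Qed.

Lemma QSpan_closed L : zclosed L -> zclosed (QSpan L).
Proof.
move=> Lc; split; first by exists 1%N; rewrite scaler0; split => //; apply: zclosed0.
move=> x y [n [n_gt0 Lx]] [m [m_gt0 Ly]].
exists (n * m)%N; split; first by rewrite muln_gt0 n_gt0.
have -> : (n * m)%:R *: (x - y) = m%:R *: (n%:R *: x) - n%:R *: (m%:R *: y).
  by rewrite !scalerA -!natrM mulnC scalerBr.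
by apply: (zclosedB Lc); rewrite scaler_nat; apply: zclosedMn.
Qed.

Lemma QSpan_sub L x : L x -> QSpan L x.
Proof. by exists 1%N; rewrite scale1r. Qed.

Lemma inZspanP m (B : 'M[rat]_(m, 12)) x :
  inZspan B x <-> exists2 r : 'rV_m, r \is a mxOver Num.int & x = r *m B.
Proof.
split=> [[c ->] | [r /mxOverP r_int ->]].
  by exists (map_mx intr c) => //; apply/mxOverP => i j; rewrite mxE intr_int.
exists (map_mx (@Num.floor _) r); congr (_ *m _); apply/matrixP => i j.
by rewrite !mxE floorK.
Qed.

Lemma inZspan_closed m (B : 'M[rat]_(m, 12)) : zclosed (inZspan B).
Proof.
split; first by exists 0; rewrite map_mx0 mul0mx.
by move=> x y [c ->] [d ->]; exists (c - d); rewrite map_mxB mulmxBl.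
Qed.

Lemma inZspan_row m (B : 'M[rat]_(m, 12)) i : inZspan B (row i B).
Proof.
apply/inZspanP; exists (delta_mx 0 i); last exact: rowE.
by apply/mxOverP => a b; rewrite mxE; case: (_ && _).
Qed.

Lemma inZspan_ind m (B : 'M[rat]_(m, 12)) (P : 'rV[rat]_12 -> Prop) :
  zclosed P -> (forall i, P (row i B)) -> forall x, inZspan B x -> P x.
Proof.
move=> Pc P_row _ [c ->]; rewrite mulmx_sum_row.
by apply: zclosed_sum => // i _; rewrite mxE; apply: zclosedZ.
Qed.

Lemma inZspan_inLambda m (B : 'M[rat]_(m, 12)) x :
  (forall i j, B i j \is a Num.int) -> inZspan B x -> inLambda x.
Proof.
move=> B_int; apply: inZspan_ind; first exact: inLambda_closed.
by move=> i j; rewrite mxE.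
Qed.

Lemma e8_entry_sym i j : e8_entry i j = e8_entry j i.
Proof. by rewrite /e8_entry /e8_edge eq_sym orbC. Qed.

Lemma lam_entry_sym i j : lam_entry i j = lam_entry j i.
Proof.
rewrite /lam_entry e8_entry_sym.
by case: i => [|[|[|[|i]]]]; case: j => [|[|[|[|j]]]].
Qed.

Lemma LamGram_sym : LamGram^T = LamGram.
Proof. by apply/matrixP => i j; rewrite !mxE lam_entry_sym. Qed.

Lemma lamformDl x y z : lamform (x + y) z = lamform x z + lamform y z.
Proof. by rewrite /lamform !mulmxDl mxE. Qed.

Lemma lamformZl a x z : lamform (a *: x) z = a * lamform x z.
Proof. by rewrite /lamform -!scalemxAl mxE. Qed.

Lemma lamform0l x : lamform 0 x = 0.
Proof. by rewrite -(scale0r 0) lamformZl mul0r. Qed.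

Lemma lamformBl x y z : lamform (x - y) z = lamform x z - lamform y z.
Proof. by rewrite lamformDl -scaleN1r lamformZl mulN1r. Qed.

Lemma lamformC x y : lamform x y = lamform y x.
Proof.
have entry_tr (A : 'M[rat]_1) : A 0 0 = A^T 0 0 by rewrite mxE.
by rewrite /lamform [LHS]entry_tr !trmx_mul trmxK LamGram_sym mulmxA.
Qed.

Lemma lamformDr x y z : lamform x (y + z) = lamform x y + lamform x z.
Proof. by rewrite lamformC lamformDl !(lamformC x). Qed.

Lemma lamformBr x y z : lamform x (y - z) = lamform x y - lamform x z.
Proof. by rewrite lamformC lamformBl !(lamformC x). Qed.

Lemma Eset_closed BK : zclosed (Eset BK).
Proof.
split; first by split=> [|k _]; [apply: zclosed0 inLambda_closed | apply: lamform0l].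
move=> x y [Lx x_orth] [Ly y_orth]; split; first exact: (zclosedB inLambda_closed).
by move=> k Kk; rewrite lamformBl x_orth // y_orth // subrr.
Qed.

Lemma lamform_orth_sum a b :
  lamform a b = 0 -> lamform (a + b) (a + b) = lamform a a + lamform b b.
Proof.
by move=> ab0; rewrite lamformDl !lamformDr ab0 (lamformC b a) ab0 addr0 add0r.
Qed.

Lemma lamform_span m (B : 'M[rat]_(m, 12)) (r s : 'rV_m) :
  lamform (r *m B) (s *m B) = (r *m (B *m LamGram *m B^T) *m s^T) 0 0.
Proof. by rewrite /lamform trmx_mul !mulmxA. Qed.

Lemma lamform_row m (B : 'M[rat]_(m, 12)) (r : 'rV_m) i :
  lamform (r *m B) (row i B) = (r *m (B *m LamGram *m B^T)) 0 i.
Proof. by rewrite /lamform !mulmxA !mxE; apply: eq_bigr => k _; rewrite !mxE. Qed.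

Lemma mxOver_int_trmx m n (M : 'M[rat]_(m, n)) :
  M \is a mxOver Num.int -> M^T \is a mxOver Num.int.
Proof. by move=> /mxOverP M_int; apply/mxOverP => i j; rewrite mxE. Qed.

Section GramSpan.
Variables (m : nat) (B : 'M[rat]_(m, 12)).
Local Notation G := (B *m LamGram *m B^T).

Lemma QSpan_inZspan u : QSpan (inZspan B) u -> exists r : 'rV_m, u = r *m B.
Proof.
case=> n [n_gt0 /inZspanP [r _ nu]]; exists (n%:R^-1 *: r).
have n_neq0 : n%:R != 0 :> rat by rewrite pnatr_eq0 -lt0n.
by rewrite -scalemxAl -nu scalerA mulVf // scale1r.
Qed.

Lemma row_lamform_basis (r : 'rV_m) : \row_i lamform (r *m B) (row i B) = r *m G.
Proof. by apply/matrixP => a i; rewrite ord1 mxE lamform_row. Qed.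

Hypothesis G_unit : G \in unitmx.

Lemma dual_span_double d :
  2 *: invmx G \is a mxOver Num.int -> dual (inZspan B) d -> inZspan B (2 *: d).
Proof.
move=> invG_int [/QSpan_inZspan [r ->] d_int].
set w := \row_i lamform (r *m B) (row i B).
have w_int : w \is a mxOver Num.int.
  by apply/mxOverP => a i; rewrite mxE; apply/d_int/inZspan_row.
apply/inZspanP; exists (w *m (2 *: invmx G)); first exact: mxOverM.
by rewrite /w row_lamform_basis -scalemxAr mulmxK // scalemxAl.
Qed.

Lemma QSpan_span_orth_eq0 u :
  QSpan (inZspan B) u -> (forall i, lamform u (row i B) = 0) -> u = 0.
Proof.
case/QSpan_inZspan=> r -> u_orth.
have rG0 : r *m G = 0.
  by rewrite -row_lamform_basis; apply/matrixP => a i; rewrite !mxE u_orth.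
by rewrite -[r](mulmxK G_unit) rG0 !mul0mx.
Qed.

Hypothesis G_half_int : 2^-1 *: G \is a mxOver Num.int.
Hypothesis G_diag_quarter_int : forall i, G i i / 4 \is a Num.int.

Lemma lamform_span_half x y :
  inZspan B x -> inZspan B y -> lamform x y / 2 \is a Num.int.
Proof.
move=> /inZspanP [r r_int ->] /inZspanP [s s_int ->].
rewrite lamform_span.
have -> : (r *m G *m s^T) 0 0 / 2 = (r *m (2^-1 *: G) *m s^T) 0 0.
  by rewrite -scalemxAr -scalemxAl [RHS]mxE mulrC.
have rGs_int : r *m (2^-1 *: G) *m s^T \is a mxOver Num.int.
  by apply: mxOverM; [apply: mxOverM | apply: mxOver_int_trmx].
exact: (mxOverP rGs_int).
Qed.

Lemma lamform_span_quarter x : inZspan B x -> lamform x x / 4 \is a Num.int.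
Proof.
pose P y := inZspan B y /\ lamform y y / 4 \is a Num.int.
have P_closed : zclosed P.
  split; first by split; [apply: zclosed0 (inZspan_closed B) | rewrite lamform0l mul0r].
  move=> x1 x2 [Bx1 x1_int] [Bx2 x2_int].
  split; first exact: (zclosedB (inZspan_closed B)).
  have -> : lamform (x1 - x2) (x1 - x2) / 4
            = lamform x1 x1 / 4 + lamform x2 x2 / 4 - lamform x1 x2 / 2.
    by rewrite lamformBl !lamformBr (lamformC x2 x1); field.
  by rewrite rpredB ?rpredD ?lamform_span_half.
have P_row i : P (row i B).
  by split; [apply: inZspan_row | rewrite {1}rowE lamform_row -rowE mxE].
by move=> Bx; case: (inZspan_ind P_closed P_row Bx).
Qed.

End GramSpan.

Lemma KGram_mul_self : KGram *m KGram = 4%:M.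
Proof.
apply/matrixP => i j; rewrite !mxE !big_ord_recr big_ord0 /= !mxE.
by case: i => [[|[|[|[|i]]]] ?]; case: j => [[|[|[|[|j]]]] ?].
Qed.

Lemma KGram_unit : KGram \in unitmx.
Proof.
have [] := @mulmx1_unit _ _ KGram (4^-1 *: KGram) => //.
by rewrite -scalemxAr KGram_mul_self scale_scalar_mx mulVf.
Qed.

Lemma invmx_KGram : invmx KGram = 4^-1 *: KGram.
Proof.
rewrite -[RHS](mulKmx KGram_unit) -scalemxAr KGram_mul_self scale_scalar_mx mulVf //.
by rewrite mulmx1.
Qed.

Lemma KGram_half_int : 2^-1 *: KGram \is a mxOver Num.int.
Proof. by apply/mxOverP => i j; rewrite !mxE; case: ifP. Qed.

Lemma KGram_diag_quarter_int i : KGram i i / 4 \is a Num.int.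
Proof. by rewrite mxE; case: i => [[|[|[|[|i]]]] ?]. Qed.

Lemma E8_2Gram_half_int : 2^-1 *: E8_2Gram \is a mxOver Num.int.
Proof. by apply/mxOverP => i j; rewrite !mxE intrM mulrA mulVf // mul1r intr_int. Qed.

Lemma E8_2Gram_diag_quarter_int i : E8_2Gram i i / 4 \is a Num.int.
Proof. by rewrite mxE /e8_entry eqxx. Qed.

Lemma int_even_or_odd (n : int) : exists q : int, n = q * 2 \/ n = q * 2 + 1.
Proof.
exists (n %/ 2)%Z; have := divz_eq n 2.
have := modz_ge0 n (_ : 2 != 0); have := ltz_pmod n (_ : 0 < 2).
lia.
Qed.

Section EnriquesLattice.
Variables (BK : 'M[rat]_(4, 12)) (BE : 'M[rat]_(8, 12)) (d1 d2 : 'rV[rat]_12).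
Hypothesis BK_int : forall i j, BK i j \is a Num.int.
Hypothesis BK_gram : BK *m LamGram *m BK^T = KGram.
Hypothesis BE_span : forall x, Eset BK x <-> inZspan BE x.
Hypothesis BE_gram : BE *m LamGram *m BE^T = E8_2Gram.
Hypothesis E_primitive : primitive (Eset BK).
Hypothesis d1_dual : dual (Kset BK) d1.
Hypothesis d2_dual : dual (Eset BK) d2.
Hypothesis Lambda_glue :
  forall x, inLambda x <-> glue_span (d1 + d2) (Kset BK) (Eset BK) x.

Let Kset_closed : zclosed (Kset BK) := inZspan_closed BK.
Let QK_closed : zclosed (QSpan (Kset BK)) := QSpan_closed Kset_closed.
Let QE_closed : zclosed (QSpan (Eset BK)) := QSpan_closed (Eset_closed BK).

Lemma Kset_inLambda k : Kset BK k -> inLambda k.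
Proof. exact: inZspan_inLambda. Qed.

Lemma Kset_lamform_quarter k : Kset BK k -> lamform k k / 4 \is a Num.int.
Proof.
apply: lamform_span_quarter; rewrite BK_gram.
  exact: KGram_half_int.
exact: KGram_diag_quarter_int.
Qed.

Lemma Eset_lamform_quarter e : Eset BK e -> lamform e e / 4 \is a Num.int.
Proof.
move/BE_span; apply: lamform_span_quarter; rewrite BE_gram.
  exact: E8_2Gram_half_int.
exact: E8_2Gram_diag_quarter_int.
Qed.

Lemma Kset_double_d1 : Kset BK (2 *: d1).
Proof.
apply: dual_span_double d1_dual; rewrite BK_gram ?KGram_unit //.
by rewrite invmx_KGram scalerA; apply: KGram_half_int.
Qed.

Lemma QSpan_Kset_Eset_eq0 u : QSpan (Kset BK) u -> QSpan (Eset BK) u -> u = 0.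
Proof.
move=> Ku [n [n_gt0 [_ nu_orth]]].
apply: (QSpan_span_orth_eq0 _ Ku) => [|i]; first by rewrite BK_gram KGram_unit.
have /eqP := nu_orth _ (inZspan_row BK i).
by rewrite lamformZl mulf_eq0 pnatr_eq0 eqn0Ngt n_gt0 => /eqP.
Qed.

Lemma dual_component_K (n : int) k e dK dE :
  Kset BK k -> Eset BK e -> dual (Kset BK) dK -> dual (Eset BK) dE ->
  dK + dE = n%:~R *: (d1 + d2) + k + e -> dK = n%:~R *: d1 + k.
Proof.
move=> Kk Ee [QdK _] [QdE _] sum_eq; apply/eqP; rewrite -subr_eq0; apply/eqP.
apply: QSpan_Kset_Eset_eq0.
  apply: (zclosedB QK_closed) QdK _.
  by apply: (zclosedD QK_closed); [apply: (zclosedZ QK_closed) d1_dual.1 | apply: QSpan_sub].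
have -> : dK - (n%:~R *: d1 + k) = n%:~R *: d2 + e - dE.
  have -> : dK = n%:~R *: (d1 + d2) + k + e - dE by rewrite -sum_eq addrK.
  by apply/matrixP => i j; rewrite !mxE; ring.
apply: (zclosedB QE_closed) _ QdE.
by apply: (zclosedD QE_closed); [apply: (zclosedZ QE_closed) d2_dual.1 | apply: QSpan_sub].
Qed.

Lemma root_glue_coeff_odd del (n : int) k e :
  lamform del del = -2 -> Kset BK k -> Eset BK e ->
  del = n%:~R *: (d1 + d2) + k + e -> exists q : int, n = q * 2 + 1.
Proof.
move=> del_root Kk Ee del_eq.
have [q [n_even | n_odd]] := int_even_or_odd n; last by exists q.
pose a := q%:~R *: (2 *: d1) + k.
have Ka : Kset BK a.
  by apply: (zclosedD Kset_closed) Kk; apply: (zclosedZ Kset_closed) Kset_double_d1.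
have Eb : Eset BK (del - a).
  apply: E_primitive.
    apply: (zclosedB inLambda_closed) (Kset_inLambda Ka).
    by apply/Lambda_glue; exists n, k, e.
  have -> : del - a = n%:~R *: d2 + e.
    by rewrite del_eq n_even; apply/matrixP => i j; rewrite !mxE intrM; ring.
  by apply: (zclosedD QE_closed); [apply: (zclosedZ QE_closed) d2_dual.1 | apply: QSpan_sub].
have : lamform del del / 4 \is a Num.int.
  have -> : del = a + (del - a) by rewrite addrC subrK.
  rewrite lamform_orth_sum; last by rewrite lamformC; apply: Eb.2.
  rewrite mulrDl; apply: rpredD; first exact: Kset_lamform_quarter.
  exact: Eset_lamform_quarter.
by rewrite del_root.
Qed.

Lemma root_dual_components del dK dE :
  inLambda del -> lamform del del = -2 ->
  dual (Kset BK) dK -> dual (Eset BK) dE -> del = dK + dE ->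
  Kset BK (dK - d1) /\ Eset BK (dE - d2).
Proof.
move=> del_L del_root dK_dual dE_dual del_sum.
have [n [k [e [Kk Ee del_eq]]]] := (Lambda_glue del).1 del_L.
have [q n_odd] := root_glue_coeff_odd del_root Kk Ee del_eq.
have KdK : Kset BK (dK - d1).
  rewrite (dual_component_K Kk Ee dK_dual dE_dual (etrans (esym del_sum) del_eq)).
  have -> : n%:~R *: d1 + k - d1 = q%:~R *: (2 *: d1) + k.
    by rewrite n_odd; apply/matrixP => i j; rewrite !mxE intrD intrM; ring.
  by apply: (zclosedD Kset_closed) Kk; apply: (zclosedZ Kset_closed) Kset_double_d1.
split=> //; apply: E_primitive.
  have -> : dE - d2 = del - (d1 + d2) - (dK - d1).
    by rewrite del_sum; apply/matrixP => i j; rewrite !mxE; ring.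
  apply: (zclosedB inLambda_closed) (Kset_inLambda KdK).
  apply: (zclosedB inLambda_closed) del_L _; apply/Lambda_glue; exists 1, 0, 0.
  split; [exact: zclosed0 Kset_closed | exact: zclosed0 (Eset_closed BK) |].
  by rewrite scale1r !addr0.
exact: (zclosedB QE_closed) dE_dual.1 d2_dual.1.
Qed.

End EnriquesLattice.

Theorem lemma3p11 (BK : 'M[rat]_(4, 12)) (d1 d2 : 'rV[rat]_12) :
  (* K_gamma is a sublattice of Lambda isometric to U(2)+U(2), primitive *)
  (forall i j, BK i j \is a Num.int) ->
  BK *m LamGram *m BK^T = KGram ->
  primitive (Kset BK) ->
  (* E_gamma = K_gamma^perp is isometric to E8(2), primitive *)
  (exists BE : 'M[rat]_(8, 12),
      (forall x, Eset BK x <-> inZspan BE x) /\ BE *m LamGram *m BE^T = E8_2Gram) ->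
  primitive (Eset BK) ->
  (* gluing vectors *)
  dual (Kset BK) d1 -> ~ Kset BK d1 ->
  dual (Eset BK) d2 -> ~ Eset BK d2 ->
  (forall x, inLambda x <->
     exists (n : int) k e, [/\ Kset BK k, Eset BK e & x = n%:~R *: (d1 + d2) + k + e]) ->
  forall del : 'rV[rat]_12, inLambda del -> lamform del del = -2 ->
  forall dK dE : 'rV[rat]_12,
    dual (Kset BK) dK -> dual (Eset BK) dE -> del = dK + dE ->
  [/\ Kset BK (dK - d1), Eset BK (dE - d2) &
      forall x, inLambda x <->
        exists (n : int) k e, [/\ Kset BK k, Eset BK e & x = n%:~R *: del + k + e]].
Proof.
move=> BK_int BK_gram _ [BE [BE_span BE_gram]] E_primitive d1_dual _ d2_dual _
  Lambda_glue del del_L del_root dK dE dK_dual dE_dual del_sum.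
have [KdK EdE] := root_dual_components BK_int BK_gram BE_span BE_gram E_primitive
  d1_dual d2_dual Lambda_glue del_L del_root dK_dual dE_dual del_sum.
have Kc := inZspan_closed BK; have Ec := Eset_closed BK.
have del_shift : del = d1 + d2 + (dK - d1) + (dE - d2).
  by rewrite del_sum; apply/matrixP => i j; rewrite !mxE; ring.
have glue_shift : d1 + d2 = del + - (dK - d1) + - (dE - d2).
  by rewrite del_shift; apply/matrixP => i j; rewrite !mxE; ring.
split=> // x; rewrite Lambda_glue; split.
  by rewrite del_shift; apply: (glue_span_shift Kc Ec KdK EdE).
rewrite glue_shift.
exact: (glue_span_shift Kc Ec (zclosedN Kc KdK) (zclosedN Ec EdE)).
Qed.
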